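(* Let $\alpha>2$, let $i\in\{1,2\}$ and let $j$ be the other index. Fix $\Lambda_j>0$. Then the function \[ \Lambda_i\mapsto U_i(\Lambda_1,\Lambda_2)=\Lambda_i\int_0^\infty e^{-(\Lambda_1+\Lambda_2)x^{2/\alpha}}\frac{dx}{1+x},\qquad \Lambda_i>0, \] is smooth and continuous and has a unique maximum point $\Lambda_i^*$. *)

From Stdlib Require Import Reals.
From Coquelicot Require Import Coquelicot.
Open Scope R_scope.

Definition Iint (alpha s : R) : R :=
  RInt_gen (fun x => exp (- s * Rpower x (2 / alpha)) / (1 + x))
           (at_point 0) (Rbar_locally p_infty).

Definition U (alpha : R) (i : nat) (L1 L2 : R) : R :=
  (if Nat.eqb i 1 then L1 else L2) * Iint alpha (L1 + L2).

Definition Ui_section (alpha : R) (i : nat) (Lj : R) (L : R) : R :=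
  if Nat.eqb i 1 then U alpha 1 L Lj else U alpha 2 Lj L.

From Stdlib Require Import Reals Lra.
From Coquelicot Require Import Coquelicot.
Open Scope R_scope.

(* With [b = 2 / alpha] in (0, 1) and [c] the fixed coordinate, the section is
   [f L = L * F (L + c)] with [F s = int_0^oo exp (- s x ^ b) / (1 + x) dx]; differentiating
   under the integral shows that [F], hence [f], is smooth.  The substitution [x = L ^ (-1/b) t]
   gives [f' L = u * E (c / L, u)] with [u = L ^ (-1/b)] and
   [E (a, u) = int_0^oo exp (- t ^ b) (1 - t ^ b) exp (- a t ^ b) / (1 + u t) dt].
   The weight [exp (- t ^ b) (1 - t ^ b)] changes sign once, at [t = 1], and comparing the
   kernels of [E (a, u)] and [E (a', u')] at that point shows that [E (a, u) >= 0] forces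
   [E (a', u') > 0] when [a < a'] and [u <= u'].  Since [c / L] and [u] decrease with [L], [f']
   changes sign at most once, from [+] to [-].  It is positive for small [L], where [a] is large,
   and negative for large [L], where [E] tends to [E (0, 0) = (b - 1) int_0^oo t ^ b exp (- t ^ b) dt]
   (integration by parts). *)

(* In Stdlib [Rpower 0 b = 1]; extending [x ^ b] by [0] on [x <= 0] gives a function
   that is continuous at [0] and agrees with the integrand of [Iint] on [x > 0]. *)
Definition powp (b x : R) : R := if Rlt_dec 0 x then Rpower x b else 0.

Lemma powp_pos b x : 0 < x -> powp b x = Rpower x b.
Proof. intro Hx. unfold powp. destruct (Rlt_dec 0 x); [reflexivity | lra]. Qed.

Lemma powp_nonpos b x : x <= 0 -> powp b x = 0.
Proof. intro Hx. unfold powp. destruct (Rlt_dec 0 x); [lra | reflexivity]. Qed.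

Lemma powp_ge0 b x : 0 <= powp b x.
Proof. unfold powp. destruct (Rlt_dec 0 x); [left; apply exp_pos | lra]. Qed.

Lemma continuous_of_ex_derive (f : R -> R) x : ex_derive f x -> continuous f x.
Proof. apply (ex_derive_continuous (K := R_AbsRing) (V := R_NormedModule)). Qed.

Lemma Rpower_1_l y : Rpower 1 y = 1.
Proof. unfold Rpower. rewrite ln_1, Rmult_0_r. apply exp_0. Qed.

Lemma powp_le b x y : 0 < b -> x <= y -> powp b x <= powp b y.
Proof.
  intros Hb Hxy. destruct (Rlt_le_dec 0 x) as [Hx | Hx].
  - rewrite !powp_pos by lra. apply Rle_Rpower_l; lra.
  - rewrite (powp_nonpos b x Hx). apply powp_ge0.
Qed.

Lemma powp_lt1 b t : 0 < b -> t < 1 -> powp b t < 1.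
Proof.
  intros Hb Ht. destruct (Rlt_le_dec 0 t).
  - rewrite powp_pos, <- (Rpower_1_l b) by auto. apply Rlt_Rpower_l; auto.
  - rewrite powp_nonpos by auto. lra.
Qed.

Lemma powp_ge1 b t : 0 < b -> 1 <= t -> 1 <= powp b t.
Proof.
  intros Hb Ht. rewrite powp_pos, <- (Rpower_1_l b) by lra. apply Rle_Rpower_l; lra.
Qed.

Lemma powp_scale b L t : 0 < b -> 0 < L -> 0 <= t ->
  powp b (Rpower L (- / b) * t) = powp b t / L.
Proof.
  intros Hb HL [Ht | <-].
  - assert (Hu : 0 < Rpower L (- / b)) by apply exp_pos.
    rewrite !powp_pos by (try apply Rmult_lt_0_compat; auto).
    rewrite <- Rpower_mult_distr, Rpower_mult by auto.
    replace (- / b * b) with (- (1)) by (field; lra).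
    rewrite Rpower_Ropp, Rpower_1 by auto. unfold Rdiv. ring.
  - rewrite Rmult_0_r, powp_nonpos by lra. unfold Rdiv. ring.
Qed.

Lemma continuous_powp b x : 0 < b -> continuous (powp b) x.
Proof.
  intro Hb. destruct (Rtotal_order x 0) as [Hx | [-> | Hx]].
  - apply continuous_ext_loc with (fun _ => 0). 2: apply continuous_const.
    assert (Hx' : 0 < - x) by lra. exists (mkposreal _ Hx'). intros y Hy.
    change (Rabs (y - x) < - x) in Hy. apply Rabs_lt_between in Hy.
    rewrite powp_nonpos by lra. reflexivity.
  - apply filterlim_locally. intro eps.
    assert (Hd : 0 < Rpower eps (/ b)) by apply exp_pos.
    exists (mkposreal _ Hd). intros y Hy.
    change (Rabs (y - 0) < Rpower eps (/ b)) in Hy. rewrite Rminus_0_r in Hy.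
    change (Rabs (powp b y - powp b 0) < eps). rewrite (powp_nonpos b 0), Rminus_0_r by lra.
    destruct (Rlt_le_dec 0 y) as [Hy0 | Hy0].
    + rewrite powp_pos, Rabs_pos_eq by (try left; try apply exp_pos; auto).
      rewrite Rabs_pos_eq in Hy by lra.
      replace (pos eps) with (Rpower (Rpower eps (/ b)) b).
      * apply Rlt_Rpower_l; auto.
      * rewrite Rpower_mult, Rinv_l, Rpower_1 by (try apply cond_pos; lra). reflexivity.
    + rewrite powp_nonpos, Rabs_R0 by auto. apply cond_pos.
  - apply continuous_ext_loc with (fun y => Rpower y b).
    + exists (mkposreal x Hx). intros y Hy. change (Rabs (y - x) < x) in Hy.
      apply Rabs_lt_between in Hy. rewrite powp_pos by lra. reflexivity.
    + apply continuous_of_ex_derive. exists (b * Rpower x (b - 1)).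
      apply is_derive_Reals, derivable_pt_lim_power; auto.
Qed.

Lemma exp_le_compat x y : x <= y -> exp x <= exp y.
Proof. intros [H | ->]; [left; apply exp_increasing, H | lra]. Qed.

Lemma exp_taylor1_bound w : 0 <= exp w - 1 - w <= w ^ 2 * exp (Rabs w).
Proof.
  assert (H1 := exp_ineq1_le w). assert (H2 := exp_ineq1_le (- w)).
  assert (He : exp (- w) * exp w = 1) by (rewrite <- exp_plus, Rplus_opp_l; apply exp_0).
  assert (Hp := exp_pos w). assert (Hq := exp_pos (- w)).
  split; [lra |].
  destruct (Rle_lt_dec 0 w) as [Hw | Hw].
  - rewrite Rabs_pos_eq by auto. nra.
  - rewrite Rabs_left by auto.
    assert (1 <= exp (- w)) by (rewrite <- exp_0; left; apply exp_increasing; lra). nra.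
Qed.

Lemma Rpower_mul_exp_bounded a s : 0 <= a -> 0 < s ->
  exists K, forall y, 0 < y -> Rpower y a * exp (- s * y) <= K.
Proof.
  intros [Ha | <-] Hs.
  - (* [y s / a <= exp (y s / a - 1)], raised to the power [a] *)
    exists (exp (- a) / Rpower (s / a) a). intros y Hy.
    assert (Hsa : 0 < s / a) by (apply Rdiv_lt_0_compat; auto).
    assert (Hp : 0 < Rpower (s / a) a) by apply exp_pos.
    assert (Hle : Rpower (y * (s / a)) a <= Rpower (exp (s * y / a - 1)) a).
    { apply Rle_Rpower_l; [lra | split].
      - apply Rmult_lt_0_compat; auto.
      - replace (y * (s / a)) with (s * y / a) by (field; lra).
        assert (H1 := exp_ineq1_le (s * y / a - 1)). lra. }
    rewrite <- Rpower_mult_distr in Hle by auto. unfold Rpower at 3 in Hle.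
    rewrite ln_exp in Hle.
    replace (a * (s * y / a - 1)) with (s * y + - a) in Hle by (field; lra).
    rewrite exp_plus in Hle.
    apply Rmult_le_reg_r with (exp (s * y) * Rpower (s / a) a).
    { apply Rmult_lt_0_compat; auto. apply exp_pos. }
    replace (Rpower y a * exp (- s * y) * (exp (s * y) * Rpower (s / a) a))
      with (Rpower y a * Rpower (s / a) a * (exp (- s * y) * exp (s * y))) by ring.
    rewrite <- exp_plus. replace (- s * y + s * y) with 0 by ring. rewrite exp_0.
    replace (exp (- a) / Rpower (s / a) a * (exp (s * y) * Rpower (s / a) a))
      with (exp (s * y) * exp (- a)) by (field; lra).
    lra.
  - exists 1. intros y Hy. unfold Rpower. rewrite Rmult_0_l, exp_0, Rmult_1_l.
    rewrite <- exp_0. left. apply exp_increasing. nra.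
Qed.

Lemma pow2_mul_le_pow3_mul x P : 0 <= x -> 0 <= P -> (1 + x) ^ 2 * P <= (1 + x) ^ 3 * P.
Proof. intros Hx HP. apply Rmult_le_compat_r; auto. simpl. nra. Qed.

Lemma powp_moment_decay b n s : 0 < b -> 0 < s -> exists C, forall x, 0 <= x ->
  (1 + x) ^ 3 * (powp b x ^ n * exp (- s * powp b x)) <= C.
Proof.
  intros Hb Hs.
  destruct (Rpower_mul_exp_bounded (INR n) s (pos_INR n) Hs) as [K1 HK1].
  assert (Ha : 0 <= 3 / b + INR n).
  { assert (0 < 3 / b) by (apply Rdiv_lt_0_compat; lra). assert (Hn := pos_INR n). lra. }
  destruct (Rpower_mul_exp_bounded _ s Ha Hs) as [K2 HK2].
  assert (HK1p : 0 <= K1).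
  { eapply Rle_trans; [| apply (HK1 1); lra].
    apply Rmult_le_pos; left; apply exp_pos. }
  assert (HK2p : 0 <= K2).
  { eapply Rle_trans; [| apply (HK2 1); lra].
    apply Rmult_le_pos; left; apply exp_pos. }
  exists (4 * (K1 + K2) + 1). intros x [Hx | <-].
  - (* substitute [y = x ^ b]; then [(1 + x) ^ 3 <= 4 (1 + y ^ (3 / b))] *)
    rewrite powp_pos by auto. set (y := Rpower x b).
    assert (Hy : 0 < y) by apply exp_pos.
    assert (Hxy : x = Rpower y (/ b)).
    { unfold y. rewrite Rpower_mult, Rinv_r, Rpower_1 by lra. reflexivity. }
    assert (Hx3 : x ^ 3 = Rpower y (3 / b)).
    { rewrite Hxy, <- Rpower_pow by apply exp_pos. rewrite Rpower_mult.
      f_equal. simpl. field. lra. }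
    assert (Hyn : y ^ n = Rpower y (INR n)) by (rewrite Rpower_pow; auto).
    assert (E1 := HK1 y Hy). assert (E2 := HK2 y Hy).
    rewrite Rpower_plus, <- Hyn, <- Hx3 in E2. rewrite <- Hyn in E1.
    assert (Hc : (1 + x) ^ 3 <= 4 * (1 + x ^ 3)).
    { assert (0 <= (x - 1) ^ 2 * (x + 1)) by (apply Rmult_le_pos; [apply pow2_ge_0 | lra]). nra. }
    assert (0 <= y ^ n * exp (- s * y)) by (apply Rmult_le_pos; [apply pow_le | left; apply exp_pos]; lra).
    apply Rle_trans with (4 * (1 + x ^ 3) * (y ^ n * exp (- s * y))).
    + apply Rmult_le_compat_r; auto.
    + nra.
  - rewrite powp_nonpos by lra. rewrite Rplus_0_r, pow1, Rmult_0_r, exp_0, Rmult_1_r, Rmult_1_l.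
    destruct n; simpl; [lra |]. rewrite Rmult_0_l. lra.
Qed.

Definition is_RInt0_inf (f : R -> R) (l : R) :=
  (forall B, 0 <= B -> ex_RInt f 0 B) /\ is_lim (fun B => RInt f 0 B) p_infty l.

Definition RInt0_inf (f : R -> R) : R := real (Lim (fun B => RInt f 0 B) p_infty).

Lemma RInt0_inf_correct f l : is_RInt0_inf f l -> RInt0_inf f = l.
Proof. intros [_ H]. unfold RInt0_inf. rewrite (is_lim_unique _ _ _ H). reflexivity. Qed.

Lemma is_RInt0_inf_unique f l l' : is_RInt0_inf f l -> is_RInt0_inf f l' -> l = l'.
Proof. intros H H'. now rewrite <- (RInt0_inf_correct _ _ H), <- (RInt0_inf_correct _ _ H'). Qed.

Lemma is_RInt0_inf_ext f g l : (forall x, 0 <= x -> f x = g x) ->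
  is_RInt0_inf f l -> is_RInt0_inf g l.
Proof.
  intros Hfg [Hex Hlim].
  assert (Hon : forall B, 0 <= B -> forall x, Rmin 0 B < x < Rmax 0 B -> f x = g x).
  { intros B HB x Hx. rewrite Rmin_left, Rmax_right in Hx by lra. apply Hfg. lra. }
  split.
  - intros B HB. apply ex_RInt_ext with f; [exact (Hon B HB) | exact (Hex B HB)].
  - apply is_lim_ext_loc with (fun B => RInt f 0 B); [| exact Hlim].
    exists 0. intros B HB. apply RInt_ext, Hon. lra.
Qed.

Lemma is_RInt0_inf_plus f g l m : is_RInt0_inf f l -> is_RInt0_inf g m ->
  is_RInt0_inf (fun x => f x + g x) (l + m).
Proof.
  intros [Hf Hl] [Hg Hm]. split.
  - intros B HB. apply (ex_RInt_plus f g); auto.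
  - apply is_lim_ext_loc with (fun B => RInt f 0 B + RInt g 0 B).
    + exists 0. intros B HB. symmetry. apply (RInt_plus f g); auto with real.
    + apply is_lim_plus'; auto.
Qed.

Lemma is_RInt0_inf_scal f l c : is_RInt0_inf f l -> is_RInt0_inf (fun x => c * f x) (c * l).
Proof.
  intros [Hf Hl]. split.
  - intros B HB. apply (ex_RInt_scal f); auto.
  - apply is_lim_ext_loc with (fun B => c * RInt f 0 B).
    + exists 0. intros B HB. symmetry. apply (RInt_scal f); auto with real.
    + apply (is_lim_scal_l _ c _ l). auto.
Qed.

Lemma is_RInt0_inf_minus f g l m : is_RInt0_inf f l -> is_RInt0_inf g m ->
  is_RInt0_inf (fun x => f x - g x) (l - m).
Proof.
  intros Hf Hg. apply is_RInt0_inf_ext with (fun x => f x + (-1) * g x).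
  - intros x _. ring.
  - replace (l - m) with (l + (-1) * m) by ring.
    apply is_RInt0_inf_plus; auto. apply is_RInt0_inf_scal; auto.
Qed.

Lemma is_RInt0_inf_ge f l C : is_RInt0_inf f l ->
  (exists B0, forall B, B0 < B -> C <= RInt f 0 B) -> C <= l.
Proof.
  intros [_ Hl] [B0 HB0].
  apply (is_lim_le_loc (fun _ => C) (fun B => RInt f 0 B) p_infty C l); auto.
  - exists B0. auto.
  - apply is_lim_const.
Qed.

Lemma is_RInt0_inf_ge0 f l : is_RInt0_inf f l -> (forall x, 0 <= x -> 0 <= f x) -> 0 <= l.
Proof.
  intros Hf Hpos. apply is_RInt0_inf_ge with (1 := Hf). exists 0. intros B HB.
  apply RInt_ge_0; [lra | apply Hf; lra | intros; apply Hpos; lra].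
Qed.

Lemma is_RInt0_inf_le f g l m : (forall x, 0 <= x -> f x <= g x) ->
  is_RInt0_inf f l -> is_RInt0_inf g m -> l <= m.
Proof.
  intros Hfg Hf Hg.
  cut (0 <= m - l); [lra |].
  apply is_RInt0_inf_ge0 with (fun x => g x - f x).
  - apply is_RInt0_inf_minus; auto.
  - intros x Hx. specialize (Hfg x Hx). lra.
Qed.

Lemma is_RInt0_inf_abs_le f g l m : (forall x, 0 <= x -> Rabs (f x) <= g x) ->
  is_RInt0_inf f l -> is_RInt0_inf g m -> Rabs l <= m.
Proof.
  intros Hfg Hf Hg.
  assert (Hb : forall x, 0 <= x -> - g x <= f x <= g x).
  { intros x Hx. apply Rabs_le_between, Hfg, Hx. }
  apply Rabs_le. split.
  - assert (H := is_RInt0_inf_le (fun x => -1 * g x) f _ _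
                   ltac:(intros x Hx; specialize (Hb x Hx); lra) (is_RInt0_inf_scal _ _ (-1) Hg) Hf).
    lra.
  - apply (is_RInt0_inf_le f g); auto. intros x Hx. specialize (Hb x Hx). lra.
Qed.

Lemma RInt_le_RInt0_inf f l B : is_RInt0_inf f l -> (forall x, 0 <= x -> 0 <= f x) ->
  0 <= B -> RInt f 0 B <= l.
Proof.
  intros Hf Hpos HB. apply is_RInt0_inf_ge with (1 := Hf). exists B. intros B' HB'.
  destruct Hf as [Hex _].
  assert (HexB : ex_RInt f B B').
  { apply (ex_RInt_Chasles_2 (V := R_CompleteNormedModule)) with 0; [lra | apply Hex; lra]. }
  rewrite <- (RInt_Chasles f 0 B B'); [| apply Hex; lra | auto].
  assert (0 <= RInt f B B') by (apply RInt_ge_0; auto; [lra | intros; apply Hpos; lra]).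
  change (plus (RInt f 0 B) (RInt f B B')) with (RInt f 0 B + RInt f B B'). lra.
Qed.

Lemma is_RInt0_inf_gt0 (f : R -> R) l : is_RInt0_inf f l -> (forall x, 0 <= x -> 0 <= f x) ->
  (forall x, 0 <= x <= 1 -> continuous f x) -> (forall x, 0 < x < 1 -> 0 < f x) -> 0 < l.
Proof.
  intros Hf Hpos Hc Hsp. apply Rlt_le_trans with (RInt f 0 1).
  - apply RInt_gt_0; auto. lra.
  - apply RInt_le_RInt0_inf; auto. lra.
Qed.

Lemma is_RInt0_inf_comp_lin f l u : 0 < u -> is_RInt0_inf f l ->
  is_RInt0_inf (fun t => u * f (u * t)) l.
Proof.
  intros Hu [Hex Hl].
  assert (Hex' : forall B, 0 <= B -> ex_RInt (fun y => scal u (f (u * y + 0))) 0 B).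
  { intros B HB. apply (ex_RInt_comp_lin f u 0 0 B).
    rewrite Rmult_0_r, !Rplus_0_r. apply Hex. nra. }
  assert (Hr : forall B, 0 <= B -> RInt (fun t => u * f (u * t)) 0 B = RInt f 0 (u * B)).
  { intros B HB. transitivity (RInt f (u * 0 + 0) (u * B + 0)).
    - rewrite <- (RInt_comp_lin f u 0 0 B).
      + apply RInt_ext. intros x _. rewrite Rplus_0_r. reflexivity.
      + rewrite Rmult_0_r, !Rplus_0_r. apply Hex. nra.
    - f_equal; ring. }
  split.
  - intros B HB. apply ex_RInt_ext with (2 := Hex' B HB).
    intros x _. rewrite Rplus_0_r. reflexivity.
  - apply is_lim_spec in Hl. apply is_lim_spec. intro eps. destruct (Hl eps) as [M HM].
    exists (Rmax 0 (M / u)). intros B HB.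
    assert (H0 := Rmax_l 0 (M / u)). assert (H1 := Rmax_r 0 (M / u)).
    rewrite Hr by lra. apply HM.
    replace M with (u * (M / u)) by (field; lra). apply Rmult_lt_compat_l; lra.
Qed.

Lemma ex_RInt_continuous_le (f : R -> R) a b : a <= b ->
  (forall x, a <= x <= b -> continuous f x) -> ex_RInt f a b.
Proof.
  intros Hab Hc. apply (ex_RInt_continuous (V := R_CompleteNormedModule)). intros z Hz.
  rewrite Rmin_left, Rmax_right in Hz by lra. auto.
Qed.

Lemma RInt_tail_le (f : R -> R) C a b : (forall x, 0 <= x -> continuous f x) ->
  (forall x, 0 <= x -> (1 + x) ^ 2 * Rabs (f x) <= C) -> 0 <= a <= b ->
  Rabs (RInt f a b) <= C / (1 + a).
Proof.
  intros Hc Hd Hab.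
  assert (Hcont : forall g : R -> R, (forall x, a <= x <= b -> continuous g x) -> ex_RInt g a b)
    by (intros; apply ex_RInt_continuous_le; [lra | auto]).
  (* [C / (1 + x) ^ 2] dominates [f] and has antiderivative [- C / (1 + x)] *)
  assert (Hprim : RInt (fun x => C / (1 + x) ^ 2) a b = C / (1 + a) - C / (1 + b)).
  { apply is_RInt_unique.
    replace (C / (1 + a) - C / (1 + b)) with (minus (- C / (1 + b)) (- C / (1 + a)))
      by (unfold minus, plus, opp; simpl; field; lra).
    apply (is_RInt_derive (V := R_CompleteNormedModule) (fun y => - C / (1 + y))).
    - intros x Hx. rewrite Rmin_left, Rmax_right in Hx by lra. auto_derive; [lra | field; lra].
    - intros x Hx. rewrite Rmin_left, Rmax_right in Hx by lra.
      apply continuous_of_ex_derive. auto_derive. nra. }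
  assert (HC : 0 <= C).
  { specialize (Hd 0 (Rle_refl 0)). rewrite Rplus_0_r, pow1, Rmult_1_l in Hd.
    assert (H := Rabs_pos (f 0)). lra. }
  eapply Rle_trans. { apply abs_RInt_le; [lra | apply Hcont; intros; apply Hc; lra]. }
  eapply Rle_trans.
  { apply RInt_le with (g := fun x => C / (1 + x) ^ 2); [lra | | |].
    - apply Hcont. intros x Hx. apply continuous_comp with (g := Rabs);
        [apply Hc; lra | apply continuous_Rabs].
    - apply Hcont. intros x Hx.
      apply continuous_of_ex_derive. auto_derive. nra.
    - intros x Hx. specialize (Hd x ltac:(lra)).
      apply Rmult_le_reg_l with ((1 + x) ^ 2); [apply pow_lt; lra |].
      replace ((1 + x) ^ 2 * (C / (1 + x) ^ 2)) with C by (field; lra). exact Hd. }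
  rewrite Hprim. assert (0 <= C / (1 + b)) by (apply Rdiv_le_0_compat; lra). lra.
Qed.

Lemma is_RInt0_inf_of_decay (f : R -> R) C : (forall x, 0 <= x -> continuous f x) ->
  (forall x, 0 <= x -> (1 + x) ^ 2 * Rabs (f x) <= C) -> is_RInt0_inf f (RInt0_inf f).
Proof.
  intros Hc Hd.
  assert (Hex : forall a b, 0 <= a <= b -> ex_RInt f a b)
    by (intros a b Hab; apply ex_RInt_continuous_le; [lra | intros; apply Hc; lra]).
  assert (Hcauchy : forall a u v, 0 <= a -> a <= u -> u <= v ->
            Rabs (RInt f 0 v - RInt f 0 u) <= C / (1 + a)).
  { intros a u v Ha Hau Huv.
    assert (Hsplit : RInt f 0 u + RInt f u v = RInt f 0 v)
      by (apply (RInt_Chasles f 0 u v); apply Hex; lra).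
    rewrite <- Hsplit, Rplus_comm. unfold Rminus. rewrite Rplus_assoc, Rplus_opp_r, Rplus_0_r.
    eapply Rle_trans. { apply (RInt_tail_le f C u v); auto. lra. }
    unfold Rdiv. apply Rmult_le_compat_l.
    - specialize (Hd 0 (Rle_refl 0)). rewrite Rplus_0_r, pow1, Rmult_1_l in Hd.
      assert (H := Rabs_pos (f 0)). lra.
    - apply Rinv_le_contravar; lra. }
  destruct (proj1 (filterlim_locally_cauchy (F := Rbar_locally p_infty) (fun B => RInt f 0 B)))
    as [l Hl].
  - intro eps. assert (He := cond_pos eps).
    assert (H0 := Rmax_l 0 (C / eps)). assert (H1 := Rmax_r 0 (C / eps)).
    set (a := Rmax 0 (C / eps)) in *.
    exists (fun B => a < B). split; [exists a; auto |].
    intros u v Hu Hv. change (Rabs (RInt f 0 v - RInt f 0 u) < eps).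
    assert (Hlt : C / (1 + a) < eps).
    { apply Rmult_lt_reg_r with (1 + a); [lra |].
      replace (C / (1 + a) * (1 + a)) with C by (field; lra).
      replace C with (eps * (C / eps)) at 1 by (field; lra). nra. }
    destruct (Rle_lt_dec u v) as [Huv | Hvu].
    + eapply Rle_lt_trans; [apply (Hcauchy a); lra | exact Hlt].
    + rewrite Rabs_minus_sym. eapply Rle_lt_trans; [apply (Hcauchy a); lra | exact Hlt].
  - assert (Hl' : is_RInt0_inf f l) by (split; [intros B HB; apply Hex; lra | exact Hl]).
    rewrite (RInt0_inf_correct _ _ Hl'). exact Hl'.
Qed.

Lemma is_RInt0_inf_RInt_gen f g l : is_RInt0_inf f l -> (forall x, 0 < x -> f x = g x) ->
  is_RInt_gen g (at_point 0) (Rbar_locally p_infty) l.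
Proof.
  intros [Hex Hl] Hfg.
  apply is_RInt_gen_ext with f.
  { apply Filter_prod with (fun a => a = 0) (fun b => 0 < b); [reflexivity | exists 0; auto |].
    intros x y -> Hy z Hz. simpl in Hz. rewrite Rmin_left, Rmax_right in Hz by lra.
    apply Hfg. lra. }
  apply filterlimi_lim_ext_loc with (fun ab => RInt f (fst ab) (snd ab)).
  { apply Filter_prod with (fun a => a = 0) (fun b => 0 < b); [reflexivity | exists 0; auto |].
    intros x y -> Hy. apply (RInt_correct (V := R_CompleteNormedModule)), Hex. simpl. lra. }
  intros P HP. destruct (Hl P HP) as [M HM].
  apply Filter_prod with (fun a => a = 0) (fun b => M < b); [reflexivity | exists M; auto |].
  intros x y -> Hy. apply HM. auto.
Qed.

Lemma continuous_comp_powp (g : R -> R) b x : 0 < b -> (forall p, ex_derive g p) ->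
  continuous (fun y => g (powp b y)) x.
Proof.
  intros Hb Hg. apply (continuous_comp (powp b) g).
  - apply continuous_powp, Hb.
  - apply continuous_of_ex_derive, Hg.
Qed.

Definition kernel (b : R) (n : nat) (s x : R) : R :=
  (- powp b x) ^ n * exp (- s * powp b x) / (1 + x).

Definition kint (b : R) (n : nat) (s : R) : R := RInt0_inf (kernel b n s).

Lemma continuous_kernel b n s x : 0 < b -> 0 <= x -> continuous (kernel b n s) x.
Proof.
  intros Hb Hx. unfold kernel.
  apply (continuous_mult (fun y => (- powp b y) ^ n * exp (- s * powp b y)) (fun y => / (1 + y))).
  - apply (continuous_comp_powp (fun p => (- p) ^ n * exp (- s * p))); auto.
    intro p. auto_derive. auto.
  - apply continuous_Rinv_comp; [| lra].
    apply continuous_of_ex_derive. auto_derive. auto.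
Qed.

Lemma Rabs_kernel b n s x : 0 <= x ->
  Rabs (kernel b n s x) = powp b x ^ n * exp (- s * powp b x) / (1 + x).
Proof.
  intro Hx. unfold kernel, Rdiv.
  rewrite !Rabs_mult, Rabs_inv, <- RPow_abs, Rabs_Ropp.
  rewrite (Rabs_pos_eq (powp b x)) by apply powp_ge0.
  rewrite (Rabs_pos_eq (exp _)) by (left; apply exp_pos).
  rewrite (Rabs_pos_eq (1 + x)) by lra. reflexivity.
Qed.

Lemma kernel_decay b n s : 0 < b -> 0 < s ->
  exists C, forall x, 0 <= x -> (1 + x) ^ 2 * Rabs (kernel b n s x) <= C.
Proof.
  intros Hb Hs. destruct (powp_moment_decay b n s Hb Hs) as [C HC]. exists C.
  intros x Hx. rewrite Rabs_kernel by auto. eapply Rle_trans; [| apply (HC x Hx)].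
  set (P := powp b x ^ n * exp (- s * powp b x)).
  assert (HP : 0 <= P) by (apply Rmult_le_pos; [apply pow_le, powp_ge0 | left; apply exp_pos]).
  apply Rle_trans with ((1 + x) ^ 2 * P); [| apply pow2_mul_le_pow3_mul; auto].
  apply Rmult_le_compat_l; [apply pow_le; lra |].
  unfold Rdiv. rewrite <- (Rmult_1_r P) at 2. apply Rmult_le_compat_l; auto.
  rewrite <- Rinv_1. apply Rinv_le_contravar; lra.
Qed.

Lemma is_RInt0_inf_kernel b n s : 0 < b -> 0 < s -> is_RInt0_inf (kernel b n s) (kint b n s).
Proof.
  intros Hb Hs. destruct (kernel_decay b n s Hb Hs) as [C HC].
  apply is_RInt0_inf_of_decay with C; auto. intros; apply continuous_kernel; auto.
Qed.

Lemma is_RInt0_inf_abs_kernel b n s : 0 < b -> 0 < s ->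
  is_RInt0_inf (fun x => Rabs (kernel b n s x)) (RInt0_inf (fun x => Rabs (kernel b n s x))).
Proof.
  intros Hb Hs. destruct (kernel_decay b n s Hb Hs) as [C HC].
  apply is_RInt0_inf_of_decay with C.
  - intros x Hx. apply (continuous_comp (kernel b n s) Rabs).
    + apply continuous_kernel; auto.
    + apply continuous_Rabs.
  - intros x Hx. rewrite Rabs_Rabsolu. auto.
Qed.

Lemma kernel_taylor_le b n s h x : 0 <= x -> Rabs h < s / 2 ->
  Rabs (kernel b n (s + h) x - kernel b n s x - h * kernel b (S n) s x)
  <= h ^ 2 * Rabs (kernel b (S (S n)) (s / 2) x).
Proof.
  intros Hx Hh. rewrite Rabs_kernel by auto. set (p := powp b x).
  assert (Hp : 0 <= p) by apply powp_ge0.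
  replace (kernel b n (s + h) x - kernel b n s x - h * kernel b (S n) s x)
    with (kernel b n s x * (exp (- h * p) - 1 - (- h * p))).
  2: { unfold kernel. fold p. simpl.
       replace (- (s + h) * p) with (- s * p + - h * p) by ring. rewrite exp_plus. field. lra. }
  destruct (exp_taylor1_bound (- h * p)) as [E1 E2].
  rewrite Rabs_mult, (Rabs_pos_eq (exp _ - _ - _)), Rabs_kernel by lra. fold p.
  assert (Hq : exp (Rabs (- h * p)) <= exp (s / 2 * p)).
  { rewrite Rabs_mult, Rabs_Ropp, (Rabs_pos_eq p) by auto.
    destruct (Req_dec p 0) as [-> | Hp0]; [rewrite !Rmult_0_r; lra |].
    left. apply exp_increasing, Rmult_lt_compat_r; lra. }
  assert (Hsplit : exp (- s * p) * exp (s / 2 * p) = exp (- (s / 2) * p)).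
  { rewrite <- exp_plus. f_equal. field. }
  assert (0 <= p ^ n * exp (- s * p) / (1 + x)).
  { apply Rdiv_le_0_compat; [apply Rmult_le_pos; [apply pow_le; auto | left; apply exp_pos] | lra]. }
  apply Rle_trans with (p ^ n * exp (- s * p) / (1 + x) * ((- h * p) ^ 2 * exp (s / 2 * p))).
  - apply Rmult_le_compat_l; auto. eapply Rle_trans; [apply E2 |].
    apply Rmult_le_compat_l; [apply pow2_ge_0 | auto].
  - right. rewrite <- Hsplit. simpl. field. lra.
Qed.

Lemma is_derive_kint b n s : 0 < b -> 0 < s -> is_derive (kint b n) s (kint b (S n) s).
Proof.
  intros Hb Hs. apply is_derive_Reals. intros eps Heps.
  assert (Hs2 : 0 < s / 2) by lra.
  set (M := RInt0_inf (fun x => Rabs (kernel b (S (S n)) (s / 2) x))).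
  assert (HM := is_RInt0_inf_abs_kernel b (S (S n)) (s / 2) Hb Hs2). fold M in HM.
  assert (HM0 : 0 <= M) by (apply is_RInt0_inf_ge0 with (1 := HM); intros; apply Rabs_pos).
  assert (Hd : 0 < Rmin (s / 2) (eps / (M + 1))).
  { apply Rmin_pos; [lra | apply Rdiv_lt_0_compat; lra]. }
  exists (mkposreal _ Hd). intros h Hh0 Hh. simpl in Hh.
  assert (Hh1 : Rabs h < s / 2) by (eapply Rlt_le_trans; [apply Hh | apply Rmin_l]).
  assert (Hh2 : Rabs h < eps / (M + 1)) by (eapply Rlt_le_trans; [apply Hh | apply Rmin_r]).
  assert (Hsh : 0 < s + h) by (apply Rabs_lt_between in Hh1; lra).
  assert (Hrem : Rabs (kint b n (s + h) - kint b n s - h * kint b (S n) s) <= h ^ 2 * M).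
  { apply (is_RInt0_inf_abs_le
             (fun x => kernel b n (s + h) x - kernel b n s x - h * kernel b (S n) s x)
             (fun x => h ^ 2 * Rabs (kernel b (S (S n)) (s / 2) x))).
    - intros x Hx. apply kernel_taylor_le; auto.
    - apply is_RInt0_inf_minus; [apply is_RInt0_inf_minus | apply is_RInt0_inf_scal];
        apply is_RInt0_inf_kernel; auto.
    - apply is_RInt0_inf_scal, HM. }
  assert (Hhp : 0 < Rabs h) by (apply Rabs_pos_lt; auto).
  replace ((kint b n (s + h) - kint b n s) / h - kint b (S n) s)
    with ((kint b n (s + h) - kint b n s - h * kint b (S n) s) / h) by (field; auto).
  unfold Rdiv. rewrite Rabs_mult, Rabs_inv.
  apply Rle_lt_trans with (Rabs h * M).
  - rewrite <- (pow2_abs h) in Hrem.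
    apply Rmult_le_reg_r with (Rabs h); auto.
    rewrite Rmult_assoc, Rinv_l, Rmult_1_r by lra.
    replace (Rabs h * M * Rabs h) with (Rabs h ^ 2 * M) by ring. exact Hrem.
  - apply Rle_lt_trans with (eps / (M + 1) * M); [apply Rmult_le_compat_r; lra |].
    apply Rmult_lt_reg_r with (M + 1); [lra |].
    replace (eps / (M + 1) * M * (M + 1)) with (eps * M) by (field; lra).
    rewrite Rmult_plus_distr_l, Rmult_1_r. lra.
Qed.

Lemma Iint_kint alpha s : 2 < alpha -> 0 < s -> Iint alpha s = kint (2 / alpha) 0 s.
Proof.
  intros Ha Hs. assert (Hb : 0 < 2 / alpha) by (apply Rdiv_lt_0_compat; lra).
  unfold Iint. apply is_RInt_gen_unique.
  apply is_RInt0_inf_RInt_gen with (kernel (2 / alpha) 0 s).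
  - apply is_RInt0_inf_kernel; auto.
  - intros x Hx. unfold kernel. rewrite powp_pos by auto. simpl. rewrite Rmult_1_l. reflexivity.
Qed.

Lemma Derive_n_chain (f : R -> R) (G : nat -> R -> R) :
  (forall k x, 0 < x -> is_derive (G k) x (G (S k) x)) -> (forall x, 0 < x -> f x = G 0%nat x) ->
  forall n x, 0 < x -> Derive_n f n x = G n x /\ ex_derive_n f n x.
Proof.
  intros HG Hf n. induction n as [| n IH]; intros x Hx; [split; auto; exact I |].
  assert (Hd : is_derive (Derive_n f n) x (G (S n) x)).
  { apply is_derive_ext_loc with (G n); auto.
    exists (mkposreal x Hx). intros y Hy. change (Rabs (y - x) < x) in Hy.
    apply Rabs_lt_between in Hy. symmetry. apply IH. lra. }
  split; [apply is_derive_unique, Hd | exists (G (S n) x); exact Hd].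
Qed.

(* [Uderiv b c k] is the [k]-th derivative of [L |-> L * kint b 0 (L + c)] (Leibniz rule). *)
Definition Uderiv (b c : R) (k : nat) (L : R) : R :=
  L * kint b k (L + c) + INR k * kint b (pred k) (L + c).

Lemma is_derive_Uderiv b c k L : 0 < b -> 0 < c -> 0 < L ->
  is_derive (Uderiv b c k) L (Uderiv b c (S k) L).
Proof.
  intros Hb Hc HL.
  assert (Hshift : forall m, is_derive (fun y => kint b m (y + c)) L (kint b (S m) (L + c))).
  { intro m. apply is_derive_Reals. rewrite <- (Rmult_1_r (kint b (S m) (L + c))).
    apply (derivable_pt_lim_comp (fun y => y + c) (kint b m)).
    - apply is_derive_Reals. auto_derive; auto.
    - apply is_derive_Reals, is_derive_kint; lra. }
  unfold Uderiv.
  replace (L * kint b (S k) (L + c) + INR (S k) * kint b (pred (S k)) (L + c))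
    with ((1 * kint b k (L + c) + L * kint b (S k) (L + c)) + INR k * kint b (S (pred k)) (L + c)).
  2: { rewrite S_INR. destruct k; simpl; ring. }
  apply is_derive_Reals, derivable_pt_lim_plus; apply is_derive_Reals.
  - apply (is_derive_mult (fun y : R => y) (fun y => kint b k (y + c))); [| apply Hshift | apply Rmult_comm].
    auto_derive; auto.
  - apply (is_derive_scal (fun y => kint b (pred k) (y + c))), Hshift.
Qed.

Definition gam (b : R) (n : nat) (t : R) : R := powp b t ^ n * exp (- powp b t).

Lemma gam_ge0 b n t : 0 <= gam b n t.
Proof. apply Rmult_le_pos; [apply pow_le, powp_ge0 | left; apply exp_pos]. Qed.

Lemma continuous_gam b n x : 0 < b -> continuous (gam b n) x.
Proof.
  intro Hb. apply (continuous_comp_powp (fun p => p ^ n * exp (- p))); auto.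
  intro p. auto_derive. auto.
Qed.

Lemma gam_decay b n : 0 < b -> exists C, forall x, 0 <= x -> (1 + x) ^ 3 * gam b n x <= C.
Proof.
  intro Hb. destruct (powp_moment_decay b n 1 Hb Rlt_0_1) as [C HC]. exists C.
  intros x Hx. unfold gam. rewrite <- (Rmult_1_l (powp b x)) at 2.
  rewrite Ropp_mult_distr_l. auto.
Qed.

Lemma is_RInt0_inf_gam b n : 0 < b -> is_RInt0_inf (gam b n) (RInt0_inf (gam b n)).
Proof.
  intro Hb. destruct (gam_decay b n Hb) as [C HC].
  apply is_RInt0_inf_of_decay with C; [intros; apply continuous_gam; auto |].
  intros x Hx. rewrite Rabs_pos_eq by apply gam_ge0.
  eapply Rle_trans; [apply pow2_mul_le_pow3_mul, gam_ge0 | apply HC]; auto.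
Qed.

Definition weight (b t : R) : R := exp (- powp b t) * (1 - powp b t).

Lemma continuous_weight b x : 0 < b -> continuous (weight b) x.
Proof.
  intro Hb. apply (continuous_comp_powp (fun p => exp (- p) * (1 - p))); auto.
  intro p. auto_derive. auto.
Qed.

Definition ekernel (b a u t : R) : R := weight b t * exp (- a * powp b t) / (1 + u * t).

Definition eint (b a u : R) : R := RInt0_inf (ekernel b a u).

Lemma Rabs_weight_le b t : Rabs (weight b t) <= gam b 0 t + gam b 1 t.
Proof.
  unfold weight, gam. assert (Hp := powp_ge0 b t). assert (He := exp_pos (- powp b t)).
  rewrite Rabs_mult, Rabs_pos_eq by lra. simpl. rewrite Rmult_1_r.
  assert (Rabs (1 - powp b t) <= 1 + powp b t) by (apply Rabs_le; lra). nra.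
Qed.

Lemma continuous_ekernel b a u x : 0 < b -> 0 <= u -> 0 <= x -> continuous (ekernel b a u) x.
Proof.
  intros Hb Hu Hx. unfold ekernel.
  apply (continuous_mult (fun t => weight b t * exp (- a * powp b t)) (fun t => / (1 + u * t))).
  - apply (continuous_mult (weight b) (fun t => exp (- a * powp b t))).
    + apply continuous_weight, Hb.
    + apply (continuous_comp_powp (fun p => exp (- a * p))); auto. intro p. auto_derive. auto.
  - apply continuous_Rinv_comp; [apply continuous_of_ex_derive; auto_derive; auto | nra].
Qed.

Lemma Rabs_ekernel_le b a u t : 0 <= a -> 0 <= u -> 0 <= t ->
  Rabs (ekernel b a u t) <= gam b 0 t + gam b 1 t.
Proof.
  intros Ha Hu Ht. unfold ekernel, Rdiv.
  assert (Hp := powp_ge0 b t).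
  assert (He : exp (- a * powp b t) <= 1) by (rewrite <- exp_0; apply exp_le_compat; nra).
  assert (Hi : 0 < / (1 + u * t) <= 1).
  { split; [apply Rinv_0_lt_compat; nra |]. rewrite <- Rinv_1. apply Rinv_le_contravar; nra. }
  rewrite !Rabs_mult, (Rabs_pos_eq (exp _)), (Rabs_pos_eq (/ _)) by (try left; try apply exp_pos; lra).
  assert (Hw := Rabs_weight_le b t). assert (Hw0 := Rabs_pos (weight b t)).
  assert (H0 := exp_pos (- a * powp b t)).
  apply Rle_trans with (Rabs (weight b t) * 1 * 1); [| lra].
  apply Rmult_le_compat; try lra; [apply Rmult_le_pos; lra |]. apply Rmult_le_compat_l; lra.
Qed.

Lemma is_RInt0_inf_ekernel b a u : 0 < b -> 0 <= a -> 0 <= u ->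
  is_RInt0_inf (ekernel b a u) (eint b a u).
Proof.
  intros Hb Ha Hu. destruct (gam_decay b 0 Hb) as [C0 H0]. destruct (gam_decay b 1 Hb) as [C1 H1].
  apply is_RInt0_inf_of_decay with (C0 + C1); [intros; apply continuous_ekernel; auto |].
  intros x Hx. specialize (H0 x Hx). specialize (H1 x Hx).
  assert (G0 := gam_ge0 b 0 x). assert (G1 := gam_ge0 b 1 x).
  apply Rle_trans with ((1 + x) ^ 2 * (gam b 0 x + gam b 1 x)).
  - apply Rmult_le_compat_l; [apply pow_le; lra | apply Rabs_ekernel_le; auto].
  - eapply Rle_trans; [apply pow2_mul_le_pow3_mul; auto; lra | lra].
Qed.

Lemma Uderiv1_rescaled b c L : 0 < b -> 0 < c -> 0 < L ->
  Uderiv b c 1 L = Rpower L (- / b) * eint b (c / L) (Rpower L (- / b)).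
Proof.
  intros Hb Hc HL. set (u := Rpower L (- / b)).
  assert (Hu : 0 < u) by apply exp_pos.
  assert (Hs : 0 < L + c) by lra.
  assert (Hlhs := is_RInt0_inf_comp_lin _ _ u Hu
                    (is_RInt0_inf_plus _ _ _ _
                       (is_RInt0_inf_scal _ _ L (is_RInt0_inf_kernel b 1 (L + c) Hb Hs))
                       (is_RInt0_inf_scal _ _ (INR 1) (is_RInt0_inf_kernel b 0 (L + c) Hb Hs)))).
  assert (Hrhs := is_RInt0_inf_scal _ _ u
                    (is_RInt0_inf_ekernel b (c / L) u Hb ltac:(apply Rdiv_le_0_compat; lra) ltac:(lra))).
  apply (is_RInt0_inf_unique (fun t => u * ekernel b (c / L) u t)); auto.
  apply is_RInt0_inf_ext with (2 := Hlhs).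
  (* the substitution [x = u t] turns [powp b x] into [powp b t / L] *)
  intros t Ht. f_equal. unfold kernel, ekernel, weight.
  assert (Hscale := powp_scale b L t Hb HL Ht). fold u in Hscale. rewrite Hscale.
  simpl INR. simpl pow.
  replace (- (L + c) * (powp b t / L)) with (- powp b t + - (c / L) * powp b t) by (field; lra).
  rewrite exp_plus. field. split; apply Rgt_not_eq; nra.
Qed.

Lemma crossing_factor_sign b d u u' t : 0 < b -> 0 < d -> 0 <= u <= u' -> 0 <= t ->
  let X := (1 - powp b t) *
    (exp (- d * powp b t) * ((1 + u') * (1 + u * t)) - exp (- d) * ((1 + u) * (1 + u' * t))) in
  0 <= X /\ (0 < t < 1 -> 0 < X).
Proof.
  intros Hb Hd [Hu Huu] Ht X. assert (Hp := powp_ge0 b t).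
  assert (Hut : 0 <= u * t) by nra. assert (Hut' : 0 <= u' * t) by nra.
  assert (He := exp_pos (- d)). assert (He' := exp_pos (- d * powp b t)).
  destruct (Rlt_le_dec t 1) as [Ht1 | Ht1].
  - assert (Hp1 := powp_lt1 b t Hb Ht1).
    assert (Hm : (1 + u) * (1 + u' * t) <= (1 + u') * (1 + u * t)) by nra.
    assert (Hpos : 0 < (1 + u) * (1 + u' * t)) by (apply Rmult_lt_0_compat; lra).
    assert (Hexp : exp (- d) <= exp (- d * powp b t)) by (apply exp_le_compat; nra).
    assert (Hbr : exp (- d) * ((1 + u) * (1 + u' * t)) <= exp (- d * powp b t) * ((1 + u') * (1 + u * t)))
      by (apply Rmult_le_compat; lra).
    split; [unfold X; nra |].
    intros [Ht0 _].
    assert (Hq : 0 < powp b t) by (rewrite powp_pos by auto; apply exp_pos).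
    assert (exp (- d) < exp (- d * powp b t)) by (apply exp_increasing; nra).
    assert (exp (- d) * ((1 + u) * (1 + u' * t)) < exp (- d * powp b t) * ((1 + u') * (1 + u * t))).
    { apply Rlt_le_trans with (exp (- d * powp b t) * ((1 + u) * (1 + u' * t))); [nra |].
      apply Rmult_le_compat_l; lra. }
    unfold X. nra.
  - assert (Hp1 := powp_ge1 b t Hb Ht1).
    assert (Hm : (1 + u') * (1 + u * t) <= (1 + u) * (1 + u' * t)) by nra.
    assert (Hexp : exp (- d * powp b t) <= exp (- d)) by (apply exp_le_compat; nra).
    assert (exp (- d * powp b t) * ((1 + u') * (1 + u * t)) <= exp (- d) * ((1 + u) * (1 + u' * t)))
      by (apply Rmult_le_compat; try lra; nra).
    split; [unfold X; nra | lra].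
Qed.

(* Comparing [ekernel b a' u'] with the multiple [r] of [ekernel b a u] chosen so that the two
   agree at [t = 1], where [weight] changes sign: the difference then has the sign of [weight]
   times a factor changing sign at the same place, hence is nonnegative. *)
Lemma ekernel_crossing b a a' u u' t : 0 < b -> a < a' -> 0 <= u <= u' -> 0 <= t ->
  let r := exp (- (a' - a)) * (1 + u) / (1 + u') in
  let D := ekernel b a' u' t - r * ekernel b a u t in
  0 <= D /\ (0 < t < 1 -> 0 < D).
Proof.
  intros Hb Ha Hu Ht r D.
  set (d := a' - a). assert (Hd : 0 < d) by (unfold d; lra).
  destruct (crossing_factor_sign b d u u' t Hb Hd Hu Ht) as [X0 X1].
  set (X := (1 - powp b t) * _) in X0, X1.
  set (Y := exp (- powp b t) * exp (- a * powp b t) / ((1 + u' * t) * (1 + u') * (1 + u * t))).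
  assert (HY : 0 < Y).
  { unfold Y. apply Rdiv_lt_0_compat; [apply Rmult_lt_0_compat; apply exp_pos |].
    repeat apply Rmult_lt_0_compat; nra. }
  assert (HD : D = Y * X).
  { unfold D, r, Y, X, ekernel, weight.
    replace (- a' * powp b t) with (- d * powp b t + - a * powp b t) by (unfold d; ring).
    rewrite exp_plus. fold d. field. repeat split; apply Rgt_not_eq; nra. }
  rewrite HD. split; [nra | intro H01; specialize (X1 H01); nra].
Qed.

Lemma eint_single_crossing b a a' u u' : 0 < b -> 0 <= a -> a < a' -> 0 <= u -> u <= u' ->
  0 <= eint b a u -> 0 < eint b a' u'.
Proof.
  intros Hb Ha Haa Hu Huu HE.
  set (r := exp (- (a' - a)) * (1 + u) / (1 + u')).
  assert (Hr : 0 < r).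
  { apply Rdiv_lt_0_compat; [apply Rmult_lt_0_compat; [apply exp_pos | lra] | lra]. }
  assert (Hpos : 0 < eint b a' u' - r * eint b a u).
  { apply is_RInt0_inf_gt0 with (fun t => ekernel b a' u' t - r * ekernel b a u t).
    - apply is_RInt0_inf_minus; [| apply is_RInt0_inf_scal]; apply is_RInt0_inf_ekernel; lra.
    - intros t Ht. apply (ekernel_crossing b a a' u u' t); auto; lra.
    - intros t Ht. apply (continuous_minus (ekernel b a' u') (fun t => r * ekernel b a u t)).
      + apply continuous_ekernel; lra.
      + apply (continuous_scal_r r (ekernel b a u)), continuous_ekernel; lra.
    - intros t Ht. apply (ekernel_crossing b a a' u u' t); auto; lra. }
  assert (0 <= r * eint b a u) by (apply Rmult_le_pos; lra). lra.
Qed.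

Lemma Uderiv1_single_crossing b c L L' : 0 < b -> 0 < c -> 0 < L -> L < L' ->
  0 <= Uderiv b c 1 L' -> 0 < Uderiv b c 1 L.
Proof.
  intros Hb Hc HL HLL HD.
  rewrite Uderiv1_rescaled in HD |- * by lra.
  assert (Hu' : 0 < Rpower L' (- / b)) by apply exp_pos.
  assert (Hu : 0 < Rpower L (- / b)) by apply exp_pos.
  assert (Huu : Rpower L' (- / b) < Rpower L (- / b)).
  { rewrite !Rpower_Ropp. apply Rinv_lt_contravar; [apply Rmult_lt_0_compat; apply exp_pos |].
    apply Rlt_Rpower_l; [apply Rinv_0_lt_compat |]; lra. }
  apply Rmult_lt_0_compat; auto.
  apply eint_single_crossing with (c / L') (Rpower L' (- / b)); try lra.
  - apply Rdiv_le_0_compat; lra.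
  - apply Rmult_lt_compat_l; [lra | apply Rinv_lt_contravar; nra].
  - apply Rmult_le_reg_l with (Rpower L' (- / b)); lra.
Qed.

Lemma is_derive_mul_id_0 (g : R -> R) : continuous g 0 -> is_derive (fun y => y * g y) 0 (g 0).
Proof.
  intro Hg. apply is_derive_Reals. intros eps Heps.
  apply continuity_pt_filterlim in Hg. destruct (Hg eps Heps) as [del [Hdel Hd]].
  exists (mkposreal del Hdel). intros h Hh0 Hh.
  rewrite Rplus_0_l, Rmult_0_l, Rminus_0_r.
  replace (h * g h / h - g 0) with (g h - g 0) by (field; auto).
  apply (Hd h). split; [split; [exact I | auto] |].
  simpl. unfold R_dist. rewrite Rminus_0_r. exact Hh.
Qed.

Lemma is_derive_id_mul_exp_powp b t : 0 < b -> 0 <= t ->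
  is_derive (fun y => y * exp (- powp b y)) t (gam b 0 t - b * gam b 1 t).
Proof.
  intros Hb [Ht | <-].
  - apply is_derive_ext_loc with (fun y => y * exp (- Rpower y b)).
    { exists (mkposreal t Ht). intros y Hy. change (Rabs (y - t) < t) in Hy.
      apply Rabs_lt_between in Hy. rewrite powp_pos by lra. reflexivity. }
    unfold gam. rewrite powp_pos by auto.
    replace (Rpower t b ^ 0 * exp (- Rpower t b) - b * (Rpower t b ^ 1 * exp (- Rpower t b)))
      with (1 * exp (- Rpower t b) + t * (exp (- Rpower t b) * (- (b * Rpower t (b - 1))))).
    2: { assert (Htp : t * Rpower t (b - 1) = Rpower t b).
         { rewrite <- (Rpower_1 t) at 1 by auto. rewrite <- Rpower_plus. f_equal. ring. }
         rewrite <- Htp. simpl. ring. }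
    apply is_derive_Reals.
    apply (derivable_pt_lim_mult (fun y => y) (fun y => exp (- Rpower y b))).
    + apply derivable_pt_lim_id.
    + apply (derivable_pt_lim_comp (fun y => - Rpower y b) exp).
      * apply (derivable_pt_lim_opp (fun y => Rpower y b)), derivable_pt_lim_power; auto.
      * apply derivable_pt_lim_exp.
  - unfold gam. rewrite powp_nonpos by lra. simpl.
    replace (1 * exp (- 0) - b * (0 * 1 * exp (- 0))) with (exp (- powp b 0))
      by (rewrite powp_nonpos, Ropp_0, exp_0 by lra; ring).
    apply (is_derive_mul_id_0 (fun y => exp (- powp b y))).
    apply (continuous_comp_powp (fun p => exp (- p))); auto. intro p. auto_derive. auto.
Qed.

Lemma RInt0_inf_gam0 b : 0 < b -> RInt0_inf (gam b 0) = b * RInt0_inf (gam b 1).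
Proof.
  intros Hb.
  assert (HD := is_RInt0_inf_minus _ _ _ _ (is_RInt0_inf_gam b 0 Hb)
                  (is_RInt0_inf_scal _ _ b (is_RInt0_inf_gam b 1 Hb))).
  assert (Hcont : forall x, continuous (fun t => gam b 0 t - b * gam b 1 t) x).
  { intro x. apply (continuous_minus (gam b 0) (fun t => b * gam b 1 t)).
    - apply continuous_gam, Hb.
    - apply (continuous_scal_r b (gam b 1)), continuous_gam, Hb. }
  cut (RInt0_inf (gam b 0) - b * RInt0_inf (gam b 1) = 0); [lra |].
  apply (is_RInt0_inf_unique _ _ _ HD). split.
  - intros B HB. apply (ex_RInt_continuous (V := R_CompleteNormedModule)). auto.
  - (* integrate the derivative of [t exp (- t ^ b)], which tends to [0] *)
    apply is_lim_ext_loc with (fun B => B * exp (- powp b B)).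
    { exists 0. intros B HB. symmetry. apply is_RInt_unique.
      replace (B * exp (- powp b B))
        with (minus (B * exp (- powp b B)) (0 * exp (- powp b 0)))
        by (unfold minus, plus, opp; simpl; ring).
      apply (is_RInt_derive (V := R_CompleteNormedModule) (fun y => y * exp (- powp b y))).
      - intros x Hx. rewrite Rmin_left, Rmax_right in Hx by lra.
        apply is_derive_id_mul_exp_powp; auto; lra.
      - auto. }
    destruct (gam_decay b 0 Hb) as [C HC].
    assert (HC0 : 0 <= C).
    { eapply Rle_trans; [| apply (HC 0 (Rle_refl 0))].
      apply Rmult_le_pos; [apply pow_le; lra | apply gam_ge0]. }
    apply is_lim_spec. intro eps. assert (Heps := cond_pos eps).
    exists (C / eps). intros B HB.
    assert (HB0 : 0 < B) by (assert (0 <= C / eps) by (apply Rdiv_le_0_compat; lra); lra).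
    specialize (HC B (Rlt_le _ _ HB0)). unfold gam in HC. simpl in HC. rewrite Rmult_1_l in HC.
    assert (He := exp_pos (- powp b B)).
    rewrite Rminus_0_r, Rabs_pos_eq by nra.
    assert (H1 : B * exp (- powp b B) * B <= C) by nra.
    assert (H2 : C < eps * B) by (apply Rmult_lt_reg_r with (/ eps);
      [apply Rinv_0_lt_compat; lra | replace (eps * B * / eps) with B by (field; lra); exact HB]).
    nra.
Qed.

Lemma ekernel00 b t : ekernel b 0 0 t = gam b 0 t - gam b 1 t.
Proof.
  unfold ekernel, weight, gam. rewrite !Rmult_0_l, Ropp_0, Rmult_0_l, exp_0, Rplus_0_r. simpl. field.
Qed.

Lemma eint00_neg b : 0 < b < 1 -> eint b 0 0 < 0.
Proof.
  intros [Hb Hb1].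
  assert (HP : 0 < RInt0_inf (gam b 1)).
  { apply is_RInt0_inf_gt0 with (gam b 1).
    - apply is_RInt0_inf_gam, Hb.
    - intros; apply gam_ge0.
    - intros; apply continuous_gam, Hb.
    - intros x Hx. unfold gam. rewrite powp_pos by lra. simpl. rewrite Rmult_1_r.
      apply Rmult_lt_0_compat; apply exp_pos. }
  assert (HE : eint b 0 0 = RInt0_inf (gam b 0) - RInt0_inf (gam b 1)).
  { apply RInt0_inf_correct, is_RInt0_inf_ext with (fun t => gam b 0 t - gam b 1 t).
    - intros t _. symmetry. apply ekernel00.
    - apply is_RInt0_inf_minus; apply is_RInt0_inf_gam, Hb. }
  rewrite HE, RInt0_inf_gam0 by auto. nra.
Qed.

Lemma ekernel_sub_ekernel00_le b a u t : 0 <= a -> 0 <= u -> 0 <= t ->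
  Rabs (ekernel b a u t - ekernel b 0 0 t)
  <= a * (gam b 1 t + gam b 2 t) + u * (t * (gam b 0 t + gam b 1 t)).
Proof.
  intros Ha Hu Ht.
  assert (Hp := powp_ge0 b t). set (p := powp b t) in *.
  assert (Hut : 0 <= u * t) by nra.
  assert (Hk1 : 1 - a * p - u * t <= exp (- a * p) / (1 + u * t)).
  { assert (H1 := exp_ineq1_le (- a * p)).
    apply Rmult_le_reg_r with (1 + u * t); [lra |].
    replace (exp (- a * p) / (1 + u * t) * (1 + u * t)) with (exp (- a * p)) by (field; lra).
    assert (0 <= a * p * (u * t)) by (apply Rmult_le_pos; nra). nra. }
  assert (Hk2 : exp (- a * p) / (1 + u * t) <= 1).
  { apply Rmult_le_reg_r with (1 + u * t); [lra |].
    replace (exp (- a * p) / (1 + u * t) * (1 + u * t)) with (exp (- a * p)) by (field; lra).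
    assert (exp (- a * p) <= 1) by (rewrite <- exp_0; apply exp_le_compat; nra). nra. }
  replace (ekernel b a u t - ekernel b 0 0 t) with (weight b t * (exp (- a * p) / (1 + u * t) - 1)).
  2: { unfold ekernel. fold p. rewrite !Rmult_0_l, Ropp_0, Rmult_0_l, exp_0, Rplus_0_r.
       field. lra. }
  rewrite Rabs_mult, (Rabs_left1 (_ - 1)) by lra.
  assert (Hw := Rabs_weight_le b t). assert (0 <= Rabs (weight b t)) by apply Rabs_pos.
  apply Rle_trans with ((gam b 0 t + gam b 1 t) * (a * p + u * t)); [apply Rmult_le_compat; lra |].
  unfold gam. fold p. simpl. nra.
Qed.

Lemma eint_near_origin b a u : 0 < b -> 0 <= a -> 0 <= u ->
  Rabs (eint b a u - eint b 0 0) <=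
  a * (RInt0_inf (gam b 1) + RInt0_inf (gam b 2))
  + u * RInt0_inf (fun t => t * (gam b 0 t + gam b 1 t)).
Proof.
  intros Hb Ha Hu.
  assert (Hm : is_RInt0_inf (fun t => t * (gam b 0 t + gam b 1 t))
                 (RInt0_inf (fun t => t * (gam b 0 t + gam b 1 t)))).
  { destruct (gam_decay b 0 Hb) as [C0 H0]. destruct (gam_decay b 1 Hb) as [C1 H1].
    apply is_RInt0_inf_of_decay with (C0 + C1).
    - intros x Hx. apply (continuous_mult (fun t => t) (fun t => gam b 0 t + gam b 1 t)).
      + apply continuous_id.
      + apply (continuous_plus (gam b 0) (gam b 1)); apply continuous_gam, Hb.
    - intros x Hx. specialize (H0 x Hx). specialize (H1 x Hx).
      assert (G0 := gam_ge0 b 0 x). assert (G1 := gam_ge0 b 1 x).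
      rewrite Rabs_pos_eq by nra.
      replace ((1 + x) ^ 2 * (x * (gam b 0 x + gam b 1 x)))
        with (x * ((1 + x) ^ 2 * (gam b 0 x + gam b 1 x))) by ring.
      replace ((1 + x) ^ 3) with ((1 + x) * (1 + x) ^ 2) in H0, H1 by ring.
      assert (0 <= (1 + x) ^ 2) by (apply pow_le; lra). nra. }
  apply (is_RInt0_inf_abs_le (fun t => ekernel b a u t - ekernel b 0 0 t)
           (fun t => a * (gam b 1 t + gam b 2 t) + u * (t * (gam b 0 t + gam b 1 t)))).
  - intros t Ht. apply ekernel_sub_ekernel00_le; auto.
  - apply is_RInt0_inf_minus; apply is_RInt0_inf_ekernel; auto; lra.
  - apply is_RInt0_inf_plus; apply is_RInt0_inf_scal; auto.
    apply is_RInt0_inf_plus; apply is_RInt0_inf_gam, Hb.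
Qed.

Lemma ekernel_ge_head b a u t : 0 < b -> 0 <= a -> 0 <= u -> 0 <= t <= 1 / 2 ->
  exp (- a * powp b (1 / 2)) / (1 + u) * weight b t <= ekernel b a u t.
Proof.
  intros Hb Ha Hu Ht. unfold ekernel, Rdiv.
  assert (Hw : 0 <= weight b t).
  { assert (H := powp_lt1 b t Hb ltac:(lra)).
    apply Rmult_le_pos; [left; apply exp_pos | lra]. }
  assert (exp (- a * powp b (1 / 2)) <= exp (- a * powp b t)).
  { apply exp_le_compat. assert (powp b t <= powp b (1 / 2)) by (apply powp_le; lra). nra. }
  assert (/ (1 + u) <= / (1 + u * t)) by (apply Rinv_le_contravar; nra).
  assert (0 < exp (- a * powp b (1 / 2))) by apply exp_pos.
  assert (0 < / (1 + u)) by (apply Rinv_0_lt_compat; lra).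
  assert (exp (- a * powp b (1 / 2)) * / (1 + u) <= exp (- a * powp b t) * / (1 + u * t))
    by (apply Rmult_le_compat; lra).
  nra.
Qed.

Lemma ekernel_ge_tail b a u t : 0 < b -> 0 <= a -> 0 <= u -> 0 <= t ->
  - (exp (- a) / (1 + u)) * (gam b 0 t + gam b 1 t) <= ekernel b a u t.
Proof.
  intros Hb Ha Hu Ht.
  assert (G0 := gam_ge0 b 0 t). assert (G1 := gam_ge0 b 1 t).
  assert (Hc : 0 <= exp (- a) / (1 + u)) by (apply Rdiv_le_0_compat; [left; apply exp_pos | lra]).
  assert (Hk : 0 < exp (- a * powp b t) / (1 + u * t))
    by (apply Rdiv_lt_0_compat; [apply exp_pos | nra]).
  replace (ekernel b a u t) with (weight b t * (exp (- a * powp b t) / (1 + u * t)))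
    by (unfold ekernel; field; nra).
  destruct (Rlt_le_dec t 1) as [Ht1 | Ht1].
  - assert (weight b t >= 0).
    { assert (Hp := powp_lt1 b t Hb Ht1).
      apply Rle_ge, Rmult_le_pos; [left; apply exp_pos | lra]. }
    nra.
  - (* past [t = 1] the weight is negative and the factor is at most its value at [t = 1] *)
    assert (Hp1 := powp_ge1 b t Hb Ht1).
    assert (Hw : weight b t <= 0) by (unfold weight; assert (He := exp_pos (- powp b t)); nra).
    assert (Hwa := Rabs_weight_le b t). rewrite Rabs_left1 in Hwa by auto.
    assert (exp (- a * powp b t) <= exp (- a)) by (apply exp_le_compat; nra).
    assert (/ (1 + u * t) <= / (1 + u)) by (apply Rinv_le_contravar; nra).
    assert (exp (- a * powp b t) / (1 + u * t) <= exp (- a) / (1 + u)).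
    { unfold Rdiv. apply Rmult_le_compat; try lra; [left; apply exp_pos | left; apply Rinv_0_lt_compat; nra]. }
    nra.
Qed.

Lemma eint_lower_bound b a u : 0 < b -> 0 <= a -> 0 <= u ->
  (exp (- a * powp b (1 / 2)) * RInt (weight b) 0 (1 / 2)
   - exp (- a) * (RInt0_inf (gam b 0) + RInt0_inf (gam b 1))) / (1 + u) <= eint b a u.
Proof.
  intros Hb Ha Hu.
  set (c1 := exp (- a * powp b (1 / 2)) / (1 + u)). set (c2 := exp (- a) / (1 + u)).
  set (g := fun t => gam b 0 t + gam b 1 t).
  assert (Hg : is_RInt0_inf g (RInt0_inf (gam b 0) + RInt0_inf (gam b 1)))
    by (apply is_RInt0_inf_plus; apply is_RInt0_inf_gam, Hb).
  assert (Hg0 : forall t, 0 <= g t) by (intro t; unfold g; assert (H := gam_ge0 b 0 t);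
                                         assert (H' := gam_ge0 b 1 t); lra).
  assert (Hex : forall f : R -> R, (forall x, 0 <= x -> continuous f x) ->
                forall x y, 0 <= x <= y -> ex_RInt f x y)
    by (intros f Hf x y Hxy; apply ex_RInt_continuous_le; [lra | intros; apply Hf; lra]).
  assert (Hcw : forall x, 0 <= x -> continuous (weight b) x)
    by (intros; apply continuous_weight, Hb).
  assert (Hcg : forall x, 0 <= x -> continuous g x).
  { intros x _. apply (continuous_plus (gam b 0) (gam b 1)); apply continuous_gam, Hb. }
  assert (Hce : forall x, 0 <= x -> continuous (ekernel b a u) x)
    by (intros; apply continuous_ekernel; auto).
  replace ((exp (- a * powp b (1 / 2)) * RInt (weight b) 0 (1 / 2)
            - exp (- a) * (RInt0_inf (gam b 0) + RInt0_inf (gam b 1))) / (1 + u))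
    with (c1 * RInt (weight b) 0 (1 / 2) + - c2 * (RInt0_inf (gam b 0) + RInt0_inf (gam b 1)))
    by (unfold c1, c2; field; lra).
  apply is_RInt0_inf_ge with (1 := is_RInt0_inf_ekernel b a u Hb Ha Hu). exists 1. intros B HB.
  assert (Hsplit : RInt (ekernel b a u) 0 (1 / 2) + RInt (ekernel b a u) (1 / 2) B
                   = RInt (ekernel b a u) 0 B)
    by (apply (RInt_Chasles (ekernel b a u) 0 (1 / 2) B); apply Hex; auto; lra).
  rewrite <- Hsplit. apply Rplus_le_compat.
  - assert (Hs1 : RInt (fun x => c1 * weight b x) 0 (1 / 2) = c1 * RInt (weight b) 0 (1 / 2))
      by (apply (RInt_scal (V := R_CompleteNormedModule)); apply Hex; auto; lra).
    rewrite <- Hs1.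
    apply RInt_le; [lra | apply (ex_RInt_scal (V := R_CompleteNormedModule)) | |];
      try (apply Hex; auto; lra).
    intros x Hx. apply ekernel_ge_head; auto; lra.
  - assert (Htail : RInt g (1 / 2) B <= RInt0_inf (gam b 0) + RInt0_inf (gam b 1)).
    { apply Rle_trans with (RInt g 0 B); [| apply RInt_le_RInt0_inf; auto; lra].
      assert (Hg2 : RInt g 0 (1 / 2) + RInt g (1 / 2) B = RInt g 0 B)
        by (apply (RInt_Chasles g 0 (1 / 2) B); apply Hex; auto; lra).
      assert (0 <= RInt g 0 (1 / 2)) by (apply RInt_ge_0; [lra | apply Hex; auto; lra | auto]).
      lra. }
    assert (Hc2 : 0 <= c2) by (apply Rdiv_le_0_compat; [left; apply exp_pos | lra]).
    apply Rle_trans with (- c2 * RInt g (1 / 2) B); [nra |].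
    assert (Hs2 : RInt (fun x => - c2 * g x) (1 / 2) B = - c2 * RInt g (1 / 2) B)
      by (apply (RInt_scal (V := R_CompleteNormedModule)); apply Hex; auto; lra).
    rewrite <- Hs2.
    apply RInt_le; [lra | apply (ex_RInt_scal (V := R_CompleteNormedModule)) | |];
      try (apply Hex; auto; lra).
    intros x Hx. apply ekernel_ge_tail; auto; lra.
Qed.

Lemma Uderiv1_pos_near_0 b c : 0 < b < 1 -> 0 < c -> exists L, 0 < L /\ 0 < Uderiv b c 1 L.
Proof.
  intros [Hb Hb1] Hc.
  set (q := powp b (1 / 2)). set (H1 := RInt (weight b) 0 (1 / 2)).
  set (H := RInt0_inf (gam b 0) + RInt0_inf (gam b 1)).
  assert (Hq : q < 1) by (apply powp_lt1; lra). assert (Hq0 : 0 <= q) by apply powp_ge0.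
  assert (HH1 : 0 < H1).
  { apply RInt_gt_0; [lra | |].
    - intros x Hx. assert (Hp := powp_lt1 b x Hb ltac:(lra)).
      apply Rmult_lt_0_compat; [apply exp_pos | lra].
    - intros x Hx. apply continuous_weight, Hb. }
  assert (HH : 0 <= H).
  { unfold H. assert (X0 := is_RInt0_inf_ge0 _ _ (is_RInt0_inf_gam b 0 Hb) (fun x _ => gam_ge0 b 0 x)).
    assert (X1 := is_RInt0_inf_ge0 _ _ (is_RInt0_inf_gam b 1 Hb) (fun x _ => gam_ge0 b 1 x)). lra. }
  (* for [a0] large, [exp (- a0 q) H1] beats [exp (- a0) H] since [q < 1] *)
  set (a0 := H / (H1 * (1 - q)) + 1).
  assert (Ha0 : 0 < a0).
  { unfold a0. assert (0 <= H / (H1 * (1 - q))) by (apply Rdiv_le_0_compat; nra). lra. }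
  exists (c / a0). assert (HL : 0 < c / a0) by (apply Rdiv_lt_0_compat; auto). split; auto.
  rewrite Uderiv1_rescaled by auto.
  assert (Hu : 0 < Rpower (c / a0) (- / b)) by apply exp_pos.
  apply Rmult_lt_0_compat; auto.
  replace (c / (c / a0)) with a0 by (field; lra).
  eapply Rlt_le_trans; [| apply eint_lower_bound; lra]. fold q H1 H.
  apply Rdiv_lt_0_compat; [| lra].
  assert (Hz : H < a0 * (1 - q) * H1).
  { unfold a0. replace ((H / (H1 * (1 - q)) + 1) * (1 - q) * H1) with (H + (1 - q) * H1)
      by (field; lra). nra. }
  assert (He := exp_ineq1_le (a0 * (1 - q))).
  replace (exp (- a0 * q)) with (exp (- a0) * exp (a0 * (1 - q))) by (rewrite <- exp_plus; f_equal; ring).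
  assert (He0 := exp_pos (- a0)).
  assert (H < exp (a0 * (1 - q)) * H1) by nra.
  nra.
Qed.

Lemma Uderiv1_neg_near_inf b c : 0 < b < 1 -> 0 < c -> exists L, 0 < L /\ Uderiv b c 1 L < 0.
Proof.
  intros [Hb Hb1] Hc.
  set (E0 := eint b 0 0). assert (HE0 : E0 < 0) by (apply eint00_neg; auto).
  set (M1 := RInt0_inf (gam b 1) + RInt0_inf (gam b 2)).
  set (M2 := RInt0_inf (fun t => t * (gam b 0 t + gam b 1 t))).
  assert (HM1 : 0 <= M1).
  { unfold M1. assert (X0 := is_RInt0_inf_ge0 _ _ (is_RInt0_inf_gam b 1 Hb) (fun x _ => gam_ge0 b 1 x)).
    assert (X1 := is_RInt0_inf_ge0 _ _ (is_RInt0_inf_gam b 2 Hb) (fun x _ => gam_ge0 b 2 x)). lra. }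
  assert (HM2 : 0 <= M2).
  { assert (Hb0 := eint_near_origin b 0 1 Hb (Rle_refl 0) Rle_0_1).
    assert (Ha := Rabs_pos (eint b 0 1 - eint b 0 0)). fold M1 M2 in Hb0. lra. }
  (* for [L] large both [c / L] and [L ^ (- 1 / b) <= 1 / L] are small *)
  set (K := c * M1 + M2). assert (HK : 0 <= K) by (unfold K; nra).
  set (L := K / (- E0) + 1).
  assert (HL : 1 <= L) by (unfold L; assert (0 <= K / - E0) by (apply Rdiv_le_0_compat; lra); lra).
  exists L. split; [lra |].
  rewrite Uderiv1_rescaled by lra. set (u := Rpower L (- / b)).
  assert (Hu : 0 < u) by apply exp_pos.
  assert (Hu1 : u <= / L).
  { unfold u. rewrite <- (Rpower_1 L) at 2 by lra. rewrite <- Rpower_Ropp. apply Rle_Rpower; auto.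
    apply Ropp_le_contravar. rewrite <- Rinv_1. apply Rinv_le_contravar; lra. }
  assert (Hs := eint_near_origin b (c / L) u Hb ltac:(apply Rdiv_le_0_compat; lra) ltac:(lra)).
  fold M1 M2 E0 in Hs.
  assert (Hsmall : c / L * M1 + u * M2 < - E0).
  { apply Rle_lt_trans with (K / L).
    - unfold K, Rdiv. rewrite Rmult_plus_distr_r.
      assert (u * M2 <= / L * M2) by (apply Rmult_le_compat_r; auto). nra.
    - apply Rmult_lt_reg_r with L; [lra |]. replace (K / L * L) with K by (field; lra).
      unfold L. replace (- E0 * (K / - E0 + 1)) with (K - E0) by (field; lra). lra. }
  assert (Hneg : eint b (c / L) u < 0) by (assert (X := Rle_abs (eint b (c / L) u - E0)); lra).
  nra.
Qed.

Lemma derivable_pt_lim_max_0 (f : R -> R) M l : 0 < M -> derivable_pt_lim f M l ->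
  (forall L, 0 < L -> f L <= f M) -> l = 0.
Proof.
  intros HM Hd Hmax.
  assert (pr : derivable_pt f M) by (exists l; exact Hd).
  rewrite <- (deriv_maximum f 0 (M + 1) M pr HM ltac:(lra) ltac:(intros x Hx _; apply Hmax; lra)).
  destruct pr as [l' Hl']. simpl. eapply uniqueness_limite; eauto.
Qed.

Lemma unique_argmax_of_single_crossing (f D : R -> R) :
  (forall L, 0 < L -> derivable_pt_lim f L (D L)) ->
  (forall L L', 0 < L -> L < L' -> 0 <= D L' -> 0 < D L) ->
  (exists L1, 0 < L1 /\ 0 < D L1) -> (exists L2, 0 < L2 /\ D L2 < 0) ->
  exists! Ls, 0 < Ls /\ forall L, 0 < L -> f L <= f Ls.
Proof.
  intros Hd Hcross [L1 [HL1 HD1]] [L2 [HL2 HD2]].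
  assert (H12 : L1 < L2).
  { destruct (Rlt_le_dec L1 L2) as [H | [H | ->]]; auto; [| lra].
    assert (X := Hcross L2 L1 HL2 H ltac:(lra)). lra. }
  destruct (continuity_ab_maj f L1 L2 ltac:(lra)) as [M [HM HMin]].
  { intros x Hx. apply derivable_continuous_pt. exists (D x). apply Hd. lra. }
  assert (HM0 : 0 < M) by lra.
  assert (Hglob : forall L, 0 < L -> f L <= f M).
  { intros L HL. destruct (Rlt_le_dec L L1) as [HLL1 | HLL1];
      [| destruct (Rle_lt_dec L L2) as [HLL2 | HLL2]; [apply HM; lra |]].
    - destruct (MVT_cor2 f D L L1 HLL1) as [xi [Hxi1 Hxi2]]; [intros x Hx; apply Hd; lra |].
      assert (Hp := Hcross xi L1 ltac:(lra) ltac:(lra) ltac:(lra)).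
      assert (f L1 <= f M) by (apply HM; lra).
      assert (0 < D xi * (L1 - L)) by (apply Rmult_lt_0_compat; lra). lra.
    - destruct (MVT_cor2 f D L2 L HLL2) as [xi [Hxi1 Hxi2]]; [intros x Hx; apply Hd; lra |].
      assert (Hn : D xi < 0).
      { destruct (Rlt_le_dec (D xi) 0) as [X | X]; auto.
        assert (Y := Hcross L2 xi HL2 ltac:(lra) X). lra. }
      assert (f L2 <= f M) by (apply HM; lra).
      assert (D xi * (L - L2) < 0) by nra. lra. }
  exists M. split; [split; auto |].
  intros Ls [HLs Hmax].
  assert (Z1 := derivable_pt_lim_max_0 f M (D M) HM0 (Hd M HM0) Hglob).
  assert (Z2 := derivable_pt_lim_max_0 f Ls (D Ls) HLs (Hd Ls HLs) Hmax).
  destruct (Rtotal_order M Ls) as [X | [X | X]]; auto.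
  - assert (Y := Hcross M Ls HM0 X ltac:(lra)). lra.
  - assert (Y := Hcross Ls M HLs X ltac:(lra)). lra.
Qed.

Theorem lemma2 (alpha : R) (i : nat) (Lj : R) :
  2 < alpha -> (i = 1%nat \/ i = 2%nat) -> 0 < Lj ->
  (forall (n : nat) (L : R), 0 < L -> ex_derive_n (Ui_section alpha i Lj) n L) /\
  (forall L : R, 0 < L -> continuous (Ui_section alpha i Lj) L) /\
  (exists! Ls : R, 0 < Ls /\
     forall L : R, 0 < L -> Ui_section alpha i Lj L <= Ui_section alpha i Lj Ls).
Proof.
  intros Ha Hi Hc.
  set (b := 2 / alpha).
  assert (Hb : 0 < b < 1).
  { unfold b. split; [apply Rdiv_lt_0_compat; lra |].
    apply Rmult_lt_reg_r with alpha; [lra |]. unfold Rdiv. rewrite Rmult_assoc, Rinv_l; lra. }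
  assert (Hf : forall L, 0 < L -> Ui_section alpha i Lj L = Uderiv b Lj 0 L).
  { intros L HL. unfold Ui_section, U, Uderiv. simpl INR. rewrite Rmult_0_l, Rplus_0_r.
    destruct Hi as [-> | ->]; simpl; [| rewrite Rplus_comm]; rewrite Iint_kint; auto; lra. }
  assert (HG : forall k L, 0 < L -> is_derive (Uderiv b Lj k) L (Uderiv b Lj (S k) L))
    by (intros; apply is_derive_Uderiv; lra).
  assert (Hchain := Derive_n_chain _ _ HG Hf).
  assert (Hd : forall L, 0 < L -> is_derive (Ui_section alpha i Lj) L (Uderiv b Lj 1 L)).
  { intros L HL. destruct (Hchain 1%nat L HL) as [HD1 Hex1].
    rewrite <- HD1. apply Derive_correct, Hex1. }
  split; [| split].
  - intros n L HL. apply Hchain, HL.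
  - intros L HL. apply continuous_of_ex_derive. exists (Uderiv b Lj 1 L). auto.
  - apply unique_argmax_of_single_crossing with (Uderiv b Lj 1).
    + intros L HL. apply is_derive_Reals, Hd, HL.
    + intros L L' HL HLL'. apply Uderiv1_single_crossing; lra.
    + apply Uderiv1_pos_near_0; auto.
    + apply Uderiv1_neg_near_inf; auto.
Qed.
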